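(* All rules of $\mathsf{G}(\mathbf{KT}^+_D)$ except $(D_K^+)$ (that is, the eight propositional rules and $(D_T^+)$) are height-preserving invertible: whenever the conclusion of an instance of such a rule has a derivation of height $n$, each premise of that instance has a derivation of height at most $n$.
   Context: Language: fix a finite nonempty set $\mathsf{Agt}$ of agents and a countable set $\mathsf{Prop}$ of propositional variables; $\mathsf{Grp}$ is the set of nonempty subsets of $\mathsf{Agt}$. Formulas: $\alpha::=p\mid\bot\mid\alpha\wedge\alpha\mid\alpha\vee\alpha\mid\alpha\rightarrow\alpha\mid\neg\alpha\mid D_G\alpha$ ($p\in\mathsf{Prop}$, $G\in\mathsf{Grp}$). Outmost-boxed formula: one of the form $D_G\gamma$. Calculus $\mathsf{G}(\mathbf{KT}^+_D)$ (a derivation is a finite tree built from initial sequents by the rules; its height is the maximum length of a branch from the end sequent to an initial sequent): a T-sequent $\Sigma\mid\Gamma\Rightarrow\Delta$ consists of finite multisets $\Gamma,\Delta$ of formulas and a finite multiset $\Sigma$ of outmost-boxed formulas. Initial sequents: $\Sigma\mid\Gamma,p\Rightarrow p,\Delta$ ($p\in\mathsf{Prop}$) and $\Sigma\mid\bot,\Gamma\Rightarrow\Delta$. Propositional rules (with $\Sigma$ unchanged): $(R\wedge)$ from $\Sigma\mid\Gamma\Rightarrow\Delta,\alpha_1$ and $\Sigma\mid\Gamma\Rightarrow\Delta,\alpha_2$ infer $\Sigma\mid\Gamma\Rightarrow\Delta,\alpha_1\wedge\alpha_2$; $(L\wedge)$ from $\Sigma\mid\alpha_1,\alpha_2,\Gamma\Rightarrow\Delta$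 infer $\Sigma\mid\alpha_1\wedge\alpha_2,\Gamma\Rightarrow\Delta$; $(R\vee)$ from $\Sigma\mid\Gamma\Rightarrow\Delta,\alpha_1,\alpha_2$ infer $\Sigma\mid\Gamma\Rightarrow\Delta,\alpha_1\vee\alpha_2$; $(L\vee)$ from $\Sigma\mid\alpha_1,\Gamma\Rightarrow\Delta$ and $\Sigma\mid\alpha_2,\Gamma\Rightarrow\Delta$ infer $\Sigma\mid\alpha_1\vee\alpha_2,\Gamma\Rightarrow\Delta$; $(R\rightarrow)$ from $\Sigma\mid\alpha_1,\Gamma\Rightarrow\Delta,\alpha_2$ infer $\Sigma\mid\Gamma\Rightarrow\Delta,\alpha_1\rightarrow\alpha_2$; $(L\rightarrow)$ from $\Sigma\mid\Gamma\Rightarrow\Delta,\alpha_1$ and $\Sigma\mid\alpha_2,\Gamma\Rightarrow\Delta$ infer $\Sigma\mid\alpha_1\rightarrow\alpha_2,\Gamma\Rightarrow\Delta$; $(R\neg)$ from $\Sigma\mid\alpha,\Gamma\Rightarrow\Delta$ infer $\Sigma\mid\Gamma\Rightarrow\Delta,\neg\alpha$; $(L\neg)$ from $\Sigma\mid\Gamma\Rightarrow\Delta,\alpha$ infer $\Sigma\mid\neg\alpha,\Gamma\Rightarrow\Delta$. Modal rules: $(D_K^+)$: from $\emptyset\mid\alpha_1,\dots,\alpha_n\Rightarrow\beta$ ($n\ge0$) infer $\Sigma,D_{G_1}\alpha_1,\dots,D_{G_n}\alpha_n\mid\Pi\Rightarrow D_G\beta,\Omega$, provided $G_i\subseteq G$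 for all $i$, $\Sigma$ consists only of formulas $D_H\gamma$ with $H\not\subseteq G$, $\Pi$ only of propositional variables and $\bot$, and $\Omega$ only of propositional variables, $\bot$ and outmost-boxed formulas; $(D_T^+)$: from $D_G\alpha,\Sigma\mid\Gamma,\alpha\Rightarrow\Delta$ infer $\Sigma\mid\Gamma,D_G\alpha\Rightarrow\Delta$. *)

From HB Require Import structures.
From mathcomp Require Import all_boot.
From Stdlib Require Import Permutation.
From Stdlib Require List.

Set Implicit Arguments.
Unset Strict Implicit.
Unset Printing Implicit Defensive.

Definition grp (A : finType) := {G : {set A} | G != set0}.

Inductive form (A : finType) : Type :=
| Var : nat -> form A
| Bot : form A
| And : form A -> form A -> form A
| Or  : form A -> form A -> form A
| Imp : form A -> form A -> form A
| Neg : form A -> form A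
| Box : grp A -> form A -> form A.
Arguments Bot {A}.

(* T-sequents  Sigma | Gamma => Delta.  Multisets are lists taken up to
   permutation.  Sigma consists of outmost-boxed formulas D_G g, stored as
   pairs (G, g). *)
Record tseq (A : finType) := TSeq {
  tsig : list (grp A * form A);
  tant : list (form A);
  tsuc : list (form A) }.

Definition seq_equiv (A : finType) (s t : tseq A) : Prop :=
  Permutation (tsig s) (tsig t) /\ Permutation (tant s) (tant t)
  /\ Permutation (tsuc s) (tsuc t).

Definition initial (A : finType) (c : tseq A) : Prop :=
  (exists p S G D, seq_equiv c (TSeq S (Var A p :: G) (Var A p :: D))) \/
  (exists S G D, seq_equiv c (TSeq S (Bot :: G) D)).

Definition is_atomic (A : finType) (f : form A) : Prop :=
  match f with Var _ | Bot => True | _ => False end.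
Definition is_atomic_or_boxed (A : finType) (f : form A) : Prop :=
  match f with Var _ | Bot | Box _ _ => True | _ => False end.

Inductive rname : Type :=
| RAndR | RAndL | ROrR | ROrL | RImpR | RImpL | RNegR | RNegL | RDT | RDK.

Inductive rule (A : finType) : rname -> list (tseq A) -> tseq A -> Prop :=
| r_andR S G D a1 a2 c :
    seq_equiv c (TSeq S G (And a1 a2 :: D)) ->
    rule RAndR [:: TSeq S G (a1 :: D); TSeq S G (a2 :: D)] c
| r_andL S G D a1 a2 c :
    seq_equiv c (TSeq S (And a1 a2 :: G) D) ->
    rule RAndL [:: TSeq S (a1 :: a2 :: G) D] c
| r_orR S G D a1 a2 c :
    seq_equiv c (TSeq S G (Or a1 a2 :: D)) ->
    rule ROrR [:: TSeq S G (a1 :: a2 :: D)] c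
| r_orL S G D a1 a2 c :
    seq_equiv c (TSeq S (Or a1 a2 :: G) D) ->
    rule ROrL [:: TSeq S (a1 :: G) D; TSeq S (a2 :: G) D] c
| r_impR S G D a1 a2 c :
    seq_equiv c (TSeq S G (Imp a1 a2 :: D)) ->
    rule RImpR [:: TSeq S (a1 :: G) (a2 :: D)] c
| r_impL S G D a1 a2 c :
    seq_equiv c (TSeq S (Imp a1 a2 :: G) D) ->
    rule RImpL [:: TSeq S G (a1 :: D); TSeq S (a2 :: G) D] c
| r_negR S G D a c :
    seq_equiv c (TSeq S G (Neg a :: D)) ->
    rule RNegR [:: TSeq S (a :: G) D] c
| r_negL S G D a c :
    seq_equiv c (TSeq S (Neg a :: G) D) ->
    rule RNegL [:: TSeq S G (a :: D)] c
| r_DT S G D (g : grp A) a c :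
    seq_equiv c (TSeq S (Box g a :: G) D) ->
    rule RDT [:: TSeq ((g, a) :: S) (a :: G) D] c
| r_DK (S bs : list (grp A * form A)) (Pi Om : list (form A)) (g : grp A)
    (b : form A) (c : tseq A) :
    (forall h : grp A * form A, List.In h bs -> val h.1 \subset val g) ->
    (forall h : grp A * form A, List.In h S -> ~~ (val h.1 \subset val g)) ->
    List.Forall (@is_atomic A) Pi ->
    List.Forall (@is_atomic_or_boxed A) Om ->
    seq_equiv c (TSeq (S ++ bs) Pi (Box g b :: Om)) ->
    rule RDK [:: TSeq [::] (map snd bs) [:: b]] c.

Inductive derh (A : finType) : nat -> tseq A -> Prop :=
| dh_init c : initial c -> derh 0 c
| dh_rule r ps c hs :
    rule r ps c -> List.Forall2 (@derh A) hs ps ->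
    derh (foldr maxn 0 hs).+1 c.

(* Induction on the height of a derivation of the conclusion.  The principal
   formula of a rule other than D_K^+ is never an atom, so an initial
   conclusion has an initial context, and adding the premise formulas keeps it
   initial.  The last rule cannot be D_K^+, whose conclusion has only atoms on
   the left and only atoms and boxed formulas besides its own principal
   formula on the right.  If the last rule has the same principal formula, its
   premise is the wanted one; otherwise the two rules permute: invert all the
   premises of the last rule by induction and apply that rule again. *)
From HB Require Import structures.
From mathcomp Require Import all_boot.
From Stdlib Require Import Permutation RelationClasses.
From Stdlib Require List.
From mathcomp Require Import zify.

Set Implicit Arguments.
Unset Strict Implicit.
Unset Printing Implicit Defensive.

Lemma Permutation_cons_cases (T : Type) (x y : T) (l l' : list T) :
  Permutation (x :: l) (y :: l') ->
  (x = y /\ Permutation l l') \/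
  exists l0, Permutation l (y :: l0) /\ Permutation l' (x :: l0).
Proof.
move=> P; have : List.In y (x :: l) by apply: (Permutation_in _ (Permutation_sym P)); left.
case=> [exy | yl].
  by left; split=> //; subst y; exact: Permutation_cons_inv P.
have [l1 [l2 El]] := List.in_split _ _ yl; subst l.
right; exists (List.app l1 l2); split; first exact: Permutation_sym (Permutation_middle _ _ _).
apply: (@Permutation_cons_inv _ _ _ y); apply: Permutation_trans (Permutation_sym P) _.
apply: Permutation_trans (perm_swap _ _ _); apply: perm_skip.
exact: Permutation_sym (Permutation_middle _ _ _).
Qed.

Lemma Forall2_In_r (T U : Type) (P : T -> U -> Prop) xs ys y :
  List.Forall2 P xs ys -> List.In y ys -> exists2 x, List.In x xs & P x y.
Proof.
elim=> [|x y' xs' ys' Pxy _ IH] //= [<- | /IH [x' ? ?]]; first by exists x; [left|].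
by exists x'; [right|].
Qed.

Lemma In_le_foldr_maxn h hs : List.In h hs -> h <= foldr maxn 0 hs.
Proof. by elim: hs => [|h' hs IH] //= [-> | /IH]; lia. Qed.

Lemma Forall2_map_le_heights (T U X : Type) (P : nat -> T -> Prop)
    (Q : nat -> U -> Prop) (g : X -> T) (F : X -> U) xs hs :
  List.Forall2 P hs (List.map g xs) ->
  (forall h x, List.In h hs -> P h (g x) -> exists m, m <= h /\ Q m (F x)) ->
  exists ms, List.Forall2 Q ms (List.map F xs) /\ foldr maxn 0 ms <= foldr maxn 0 hs.
Proof.
elim: xs hs => [|x xs IH] hs /= PQ lower; inversion PQ as [|h ? hs' ? Ph Phs]; subst.
  by exists [::]; split.
have [m [le_mh Qm]] := lower h x (or_introl erefl) Ph.
have [|ms [Qms le_ms]] := IH hs' Phs; first by move=> h' x' hh'; apply: lower; right.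
by exists (m :: ms); split; [constructor | rewrite /=; lia].
Qed.

Section Inversion.
Variable A : finType.
Implicit Types (c d e t u ctx : tseq A) (f : form A).

#[local] Instance seq_equiv_Equivalence : Equivalence (@seq_equiv A).
Proof.
split=> [c | c d [? [? ?]] | c d e [? [? ?]] [? [? ?]]].
- by split; [|split]; apply: Permutation_refl.
- by split; [|split]; apply: Permutation_sym.
- by split; [|split]; apply: Permutation_trans; eassumption.
Qed.

Lemma initial_iff c : initial c <->
  (exists p, List.In (Var A p) (tant c) /\ List.In (Var A p) (tsuc c))
  \/ List.In Bot (tant c).
Proof.
split.
- case=> [[p [S [G [D [_ [EG ED]]]]]] | [S [G [D [_ [EG _]]]]]].
  + by left; exists p; split; [apply: (Permutation_in _ (Permutation_sym EG))
                              | apply: (Permutation_in _ (Permutation_sym ED))]; left.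
  + by right; apply: (Permutation_in _ (Permutation_sym EG)); left.
- case=> [[p [pG pD]] | botG].
  + have [G1 [G2 EG]] := List.in_split _ _ pG; have [D1 [D2 ED]] := List.in_split _ _ pD.
    left; exists p, (tsig c), (List.app G1 G2), (List.app D1 D2).
    rewrite /seq_equiv /= EG ED; split=> //.
    by split; apply: Permutation_sym (Permutation_middle _ _ _).
  + have [G1 [G2 EG]] := List.in_split _ _ botG.
    right; exists (tsig c), (List.app G1 G2), (tsuc c).
    rewrite /seq_equiv /= EG; split=> //.
    by split=> //; apply: Permutation_sym (Permutation_middle _ _ _).
Qed.

Lemma initial_seq_equiv c d : seq_equiv c d -> initial c -> initial d.
Proof.
move=> [_ [EG ED]] /initial_iff ini; apply/initial_iff.
case: ini => [[p [pG pD]] | botG]; [left; exists p; split | right];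
  by apply: Permutation_in; eassumption.
Qed.

Lemma rule_seq_equiv r ps c d : seq_equiv c d -> rule r ps c -> rule r ps d.
Proof.
move=> E; destruct 1; econstructor; try eassumption;
  by etransitivity; [symmetry; exact: E | eassumption].
Qed.

Lemma derh_seq_equiv n c d : seq_equiv c d -> derh n c -> derh n d.
Proof.
move=> E; destruct 1 as [c ini | r ps c hs rc ders].
- exact/dh_init/(initial_seq_equiv E).
- exact: dh_rule (rule_seq_equiv E rc) ders.
Qed.

Definition cat_tseq t u : tseq A :=
  TSeq (List.app (tsig t) (tsig u)) (List.app (tant t) (tant u))
       (List.app (tsuc t) (tsuc u)).

Lemma cat_tseq_equivr t u u' : seq_equiv u u' -> seq_equiv (cat_tseq t u) (cat_tseq t u').
Proof. by move=> [ES [EG ED]]; split; [|split]; apply: Permutation_app_head. Qed.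

Lemma cat_tseqCA t u v : seq_equiv (cat_tseq t (cat_tseq u v)) (cat_tseq u (cat_tseq t v)).
Proof. by split; [|split]; apply: Permutation_app_swap_app. Qed.

Lemma cat_tseq_move t u ctx ctx0 : seq_equiv ctx (cat_tseq u ctx0) ->
  seq_equiv (cat_tseq t ctx) (cat_tseq u (cat_tseq t ctx0)).
Proof. by move/(cat_tseq_equivr t)=> E; etransitivity; [exact: E | exact: cat_tseqCA]. Qed.

Lemma initial_cat_tseq t u : initial u -> initial (cat_tseq t u).
Proof.
move/initial_iff=> ini; apply/initial_iff.
case: ini => [[p [pG pD]] | botG]; [left; exists p; split | right];
  by apply: List.in_or_app; right.
Qed.

Inductive side := Ante | Succ.

Definition on_side s f : tseq A :=
  if s is Ante then TSeq [::] [:: f] [::] else TSeq [::] [::] [:: f].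

Definition principal s f : bool :=
  match s, f with
  | _, (Var _ | Bot) | Succ, Box _ _ => false
  | _, _ => true
  end.

(* The premises of the rule with principal formula [f] on side [s] and context
   [ctx] are the sequents [cat_tseq e ctx] for [e] in [premise_exts s f]. *)
Definition premise_exts s f : list (tseq A) :=
  match s, f with
  | Ante, And a b => [:: TSeq [::] [:: a; b] [::]]
  | Ante, Or a b => [:: TSeq [::] [:: a] [::]; TSeq [::] [:: b] [::]]
  | Ante, Imp a b => [:: TSeq [::] [::] [:: a]; TSeq [::] [:: b] [::]]
  | Ante, Neg a => [:: TSeq [::] [::] [:: a]]
  | Ante, Box g a => [:: TSeq [:: (g, a)] [:: a] [::]]
  | Succ, And a b => [:: TSeq [::] [::] [:: a]; TSeq [::] [::] [:: b]]
  | Succ, Or a b => [:: TSeq [::] [::] [:: a; b]]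
  | Succ, Imp a b => [:: TSeq [::] [:: a] [:: b]]
  | Succ, Neg a => [:: TSeq [::] [:: a] [::]]
  | _, _ => [::]
  end.

Lemma rule_principal r ps c : r <> RDK -> rule r ps c ->
  exists s f ctx, [/\ seq_equiv c (cat_tseq (on_side s f) ctx), principal s f
                    & ps = List.map (cat_tseq^~ ctx) (premise_exts s f)].
Proof.
move=> ne; destruct 1 as [S G D ? ? ? E|S G D ? ? ? E|S G D ? ? ? E|S G D ? ? ? E
  |S G D ? ? ? E|S G D ? ? ? E|S G D ? ? E|S G D ? ? E|S G D ? ? ? E|]; last by case: ne.
all: first [ by exists Ante; eexists; exists (TSeq S G D); split; first exact E
           | by exists Succ; eexists; exists (TSeq S G D); split; first exact E ].
Qed.

Lemma principal_rule s f ctx c : principal s f ->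
  seq_equiv c (cat_tseq (on_side s f) ctx) ->
  exists r, rule r (List.map (cat_tseq^~ ctx) (premise_exts s f)) c.
Proof.
case: ctx => S G D; case: s; case: f => //= > _ E; eexists.
all: first [ exact: r_andR E | exact: r_andL E | exact: r_orR E | exact: r_orL E
           | exact: r_impR E | exact: r_impL E | exact: r_negR E | exact: r_negL E
           | exact: r_DT E ].
Qed.

Lemma on_side_overlap s f ctx s' f' ctx' :
  seq_equiv (cat_tseq (on_side s f) ctx) (cat_tseq (on_side s' f') ctx') ->
  [/\ s = s', f = f' & seq_equiv ctx ctx'] \/
  exists ctx0, seq_equiv ctx (cat_tseq (on_side s' f') ctx0)
               /\ seq_equiv ctx' (cat_tseq (on_side s f) ctx0).
Proof.
case: s s' => [] []; case: ctx ctx' => S G D [S' G' D'] [/= ES [EG ED]].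
- case: (Permutation_cons_cases EG) => [[-> EG'] | [G0 [EG' EG'']]].
    by left; split.
  by right; exists (TSeq S G0 D); do !split=> //=; symmetry.
- by right; exists (TSeq S G D'); do !split=> //=; symmetry.
- by right; exists (TSeq S G' D); do !split=> //=; symmetry.
- case: (Permutation_cons_cases ED) => [[-> ED'] | [D0 [ED' ED'']]].
    by left; split.
  by right; exists (TSeq S G D0); do !split=> //=; symmetry.
Qed.

Lemma initial_on_side s f ctx :
  principal s f -> initial (cat_tseq (on_side s f) ctx) -> initial ctx.
Proof.
move=> pf.
have in_ctx x : is_atomic x ->
    (List.In x (tant (cat_tseq (on_side s f) ctx)) -> List.In x (tant ctx)) /\
    (List.In x (tsuc (cat_tseq (on_side s f) ctx)) -> List.In x (tsuc ctx)).
  by case: s pf => pf ax; split=> //= -[ef | //]; subst f; case: x ax pf.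
move/initial_iff=> ini; apply/initial_iff; case: ini => [[p [pG pD]] | botG].
  by left; exists p; split; [apply: (proj1 (in_ctx _ _)) | apply: (proj2 (in_ctx _ _))].
by right; apply: (proj1 (in_ctx _ _)).
Qed.

Lemma rule_RDK_not_principal ps c s f ctx : rule RDK ps c -> principal s f ->
  ~ seq_equiv c (cat_tseq (on_side s f) ctx).
Proof.
move=> rc pf [_ [EG ED]].
inversion rc as [| | | | | | | | |S bs Pi Om g b c' _ _ Pi_at Om_ab [_ [EPi EOm]]].
subst; case: s pf EG ED => /= pf EG ED.
- have : List.In f Pi.
    by apply: (Permutation_in _ EPi); apply: (Permutation_in _ (Permutation_sym EG)); left.
  by move/(List.Forall_forall _ _).1: Pi_at => Pi_at /Pi_at; case: f pf {EG ED}.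
- have : List.In f (Box g b :: Om).
    by apply: (Permutation_in _ EOm); apply: (Permutation_in _ (Permutation_sym ED)); left.
  case=> [ef | ]; first by subst f.
  by move/(List.Forall_forall _ _).1: Om_ab => Om_ab /Om_ab; case: f pf {EG ED}.
Qed.

Lemma derh_invert_principal n c s f ctx e :
  derh n c -> principal s f -> seq_equiv c (cat_tseq (on_side s f) ctx) ->
  List.In e (premise_exts s f) -> exists m, m <= n /\ derh m (cat_tseq e ctx).
Proof.
elim/ltn_ind: n c ctx => n IH c ctx der pf Ec ext.
destruct der as [c ini | r ps c hs rc ders].
  exists 0; split=> //; apply/dh_init/initial_cat_tseq/(initial_on_side pf).
  exact: initial_seq_equiv ini.
have [isDK | ne] : r = RDK \/ r <> RDK by clear rc; case: r; [right..| left].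
  by subst r; case: (rule_RDK_not_principal rc pf Ec).
have [s' [f' [ctx' [Ec' pf' Eps]]]] := rule_principal ne rc; subst ps.
have Ecc : seq_equiv (cat_tseq (on_side s f) ctx) (cat_tseq (on_side s' f') ctx').
  by etransitivity; [symmetry; exact: Ec | exact: Ec'].
case: (on_side_overlap Ecc) => [[es ef Ectx] | [ctx0 [Ectx Ectx']]].
  subst s' f'.
  have [h hh der_h] := Forall2_In_r ders (List.in_map (cat_tseq^~ ctx') _ _ ext).
  exists h; split; first by have := In_le_foldr_maxn hh; lia.
  by apply: derh_seq_equiv der_h; apply: cat_tseq_equivr; symmetry.
have [r' rc'] := principal_rule pf' (cat_tseq_move e Ectx).
have lower h e' : List.In h hs -> derh h (cat_tseq e' ctx') ->
    exists m, m <= h /\ derh m (cat_tseq e' (cat_tseq e ctx0)).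
  move=> hh der_h; have lt_hn : h < (foldr maxn 0 hs).+1 by rewrite ltnS In_le_foldr_maxn.
  have [m [le_mh der_m]] := IH h lt_hn _ _ der_h pf (cat_tseq_move e' Ectx') ext.
  by exists m; split=> //; apply: derh_seq_equiv der_m; apply: cat_tseqCA.
have [ms [ders' le_ms]] := Forall2_map_le_heights ders lower.
exists (foldr maxn 0 ms).+1; split; [lia | exact: dh_rule rc' ders'].
Qed.

End Inversion.

Theorem proposition6p10 (A : finType) (hA : 0 < #|A|) (r : rname)
    (ps : list (tseq A)) (c : tseq A) (n : nat) :
  r <> RDK -> rule r ps c -> derh n c ->
  forall p, List.In p ps -> exists m, m <= n /\ derh m p.
Proof.
move=> ne rc der p.
have [s [f [ctx [Ec pf ->]]]] := rule_principal ne rc.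
case/List.in_map_iff=> e [<- ext].
exact: derh_invert_principal der pf Ec ext.
Qed.
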